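(* Let $N\ge2$ and let $q$ be a primitive $4N$-th root of unity with $q^N=\mathbf{i}$. Then: (a) $q_\lambda\neq0$ for every strict partition $\lambda$ with $\lambda_1<N$, and $q_\lambda=0$ for every strict partition $\lambda$ with $\lambda_1=N+1$ and $\lambda_2\le N-2$; (b) $a_{N-m}=a_m$ for $0\le m\le N$, where $a_0=1$; (c) $q_{(N,\lambda_2,\dots,\lambda_r)}=q_{(\lambda_2,\dots,\lambda_r)}$ for any strict partition $(N,\lambda_2,\dots,\lambda_r)$.
   Context: $\mathbf{i}=\sqrt{-1}$, $[k]=(q^k-q^{-k})/(q-q^{-1})$. For $m\ge1$, $a_m=\prod_{j=1}^m \mathbf{i}\,\frac{q^{j-1}+q^{1-j}}{q^j-q^{-j}}$, and for a strict partition $\lambda=(\lambda_1>\dots>\lambda_r>0)$ the rational function $q_\lambda=\prod_{j=1}^r a_{\lambda_j}\prod_{1\le i<j\le r}\frac{[\lambda_i-\lambda_j]}{[\lambda_i+\lambda_j]}$ (with $q_\emptyset=1$), evaluated at the given $q$. *)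

From mathcomp Require Import all_boot all_order all_algebra all_field.
Set Implicit Arguments. Unset Strict Implicit. Unset Printing Implicit Defensive.
Import Order.TTheory GRing.Theory Num.Theory.
Local Open Scope ring_scope.

Definition qint (q : algC) (k : nat) : algC :=
  (q ^+ k - q ^- k) / (q - q^-1).

Definition acoef (q : algC) (m : nat) : algC :=
  \prod_(1 <= j < m.+1)
     ('i * (q ^+ (j.-1) + q ^- (j.-1)) / (q ^+ j - q ^- j)).

Definition strict_partition (l : seq nat) : bool :=
  sorted (fun x y => y < x)%N l && all (fun x => 0 < x)%N l.

Definition qlam (q : algC) (l : seq nat) : algC :=
  (\prod_(j < size l) acoef q (nth 0%N l j)) *
  \prod_(i < size l) \prod_(j < size l | (i < j)%N)
     (qint q (nth 0%N l i - nth 0%N l j) / qint q (nth 0%N l i + nth 0%N l j)).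

From mathcomp Require Import all_boot all_order all_algebra all_field.
From mathcomp Require Import zify.
Import Order.TTheory GRing.Theory Num.Theory.
Set Implicit Arguments. Unset Strict Implicit. Unset Printing Implicit Defensive.
Local Open Scope ring_scope.

(* Write s_k = qsinh q k = q^k - q^-k and c_k = qcosh q k = q^k + q^-k.  The
   relation q^N = i gives s_(N-k) = s_(N+k) = i c_k.  Hence for j <= N the j-th
   factor i c_(j-1) / s_j of a_m equals s_(N+1-j) / s_j, so a_N = 1 and
   a_(N-m) = a_m, while the factor c_N = 0 kills a_(N+1).  Likewise
   [N-k] = [N+k], so all pair factors of a leading part N equal 1.  Every
   remaining s_k has 0 < k < 2N and is nonzero because q has order 4N. *)

Definition qsinh {R : unitRingType} (q : R) (k : nat) : R := q ^+ k - q ^- k.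
Definition qcosh {R : unitRingType} (q : R) (k : nat) : R := q ^+ k + q ^- k.

Lemma prim_root_neq0 (F : fieldType) n (z : F) :
  (0 < n)%N -> n.-primitive_root z -> z != 0.
Proof.
move=> n_gt0 prim_z; apply: contra_eq_neq (prim_expr_order prim_z) => ->.
by rewrite expr0n gtn_eqF // eq_sym oner_eq0.
Qed.

Lemma prim_expr_neq1 (R : nzRingType) n (z : R) k :
  n.-primitive_root z -> (0 < k < n)%N -> z ^+ k != 1.
Proof.
by move=> prim_z k_bd; rewrite -(prim_order_dvd prim_z); apply/negP => /dvdn_leq; lia.
Qed.

Lemma qsinh_prim_neq0 (F : fieldType) n (q : F) k :
  n.-primitive_root q -> (0 < k)%N -> (k.*2 < n)%N -> qsinh q k != 0.
Proof.
move=> prim_q k_gt0 k2_lt; have q_neq0 : q != 0 by apply: prim_root_neq0 prim_q; lia.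
rewrite subr_eq0; apply: contra_neq (prim_expr_neq1 (k := k + k) prim_q _); last by lia.
by move=> qk_eq; rewrite exprD {1}qk_eq mulVf // expf_neq0.
Qed.

Lemma qint_qsinh (q : algC) k : qint q k = qsinh q k / qsinh q 1.
Proof. by rewrite /qint /qsinh expr1. Qed.

Lemma acoefS (q : algC) m :
  acoef q m.+1 = acoef q m * ('i * qcosh q m / qsinh q m.+1).
Proof. by rewrite /acoef big_nat_recr. Qed.

Lemma qlam_nil (q : algC) : qlam q [::] = 1.
Proof. by rewrite /qlam !big_ord0 mulr1. Qed.

Lemma qlam_cons (q : algC) x l :
  qlam q (x :: l) =
  acoef q x * \prod_(y <- l) (qint q (x - y) / qint q (x + y)) * qlam q l.
Proof.
rewrite /qlam /= !big_ord_recl /= mulrACA; congr (_ * _ * (_ * _)).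
- rewrite big_mkcond big_ord_recl /= mul1r (big_nth 0%N) big_mkord.
  by apply: eq_bigr => j _; rewrite add0n.
- apply: eq_bigr => i _; rewrite big_mkcond big_ord_recl /= mul1r [RHS]big_mkcond.
  by apply: eq_bigr => j _; rewrite /bump !leq0n !add1n ltnS.
Qed.

Lemma strict_partition_cons x l :
  strict_partition (x :: l) -> strict_partition l /\ {in l, forall y, 0 < y < x}%N.
Proof.
case/andP => sorted_xl /andP[_ pos_l]; split.
  by rewrite /strict_partition (path_sorted sorted_xl).
have /allP lt_x := order_path_min (rev_trans ltn_trans) sorted_xl.
by move=> y y_l; rewrite lt_x // (allP pos_l).
Qed.

Section PrimitiveRootOfOrder4N.

Variables (N : nat) (q : algC).
Hypotheses (N_ge2 : (2 <= N)%N) (prim_q : (4 * N)%N.-primitive_root q)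
  (qN : q ^+ N = 'i).

Lemma q_neq0 : q != 0.
Proof. by apply: prim_root_neq0 prim_q; lia. Qed.

Lemma qsinh_neq0 k : (0 < k < 2 * N)%N -> qsinh q k != 0.
Proof. by move=> k_bd; apply: qsinh_prim_neq0 prim_q _ _; lia. Qed.

Lemma qcoshN : qcosh q N = 0.
Proof. by rewrite /qcosh qN invCi subrr. Qed.

Lemma qsinh_addN k : qsinh q (N + k) = 'i * qcosh q k.
Proof. by rewrite /qsinh /qcosh exprD qN invfM invCi mulrDr mulNr opprK. Qed.

Lemma qsinh_subN k : (k <= N)%N -> qsinh q (N - k) = 'i * qcosh q k.
Proof.
move=> k_le; have qk_neq0 : q ^+ k != 0 by rewrite expf_neq0 // q_neq0.
have qNk : q ^+ (N - k) = 'i * q ^- k by rewrite -qN -(subnK k_le) exprD mulfK // subnK.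
by rewrite /qsinh /qcosh qNk invfM invCi invrK mulrDr mulNr opprK addrC.
Qed.

Lemma qint_neq0 k : (0 < k < 2 * N)%N -> qint q k != 0.
Proof.
by move=> k_bd; rewrite qint_qsinh mulf_neq0 ?invr_neq0 ?qsinh_neq0 //; lia.
Qed.

Lemma qint_subN k : (k <= N)%N -> qint q (N - k) = qint q (N + k).
Proof. by move=> k_le; rewrite !qint_qsinh qsinh_subN // qsinh_addN. Qed.

Lemma acoefS_lt m : (m < N)%N ->
  acoef q m.+1 = acoef q m * (qsinh q (N - m) / qsinh q m.+1).
Proof. by move=> m_lt; rewrite acoefS qsinh_subN // ltnW. Qed.

Lemma acoef_le m : (m <= N)%N ->
  acoef q m = \prod_(j < m) (qsinh q (N - j) / qsinh q j.+1).
Proof.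
elim: m => [|m IHm] m_le; first by rewrite /acoef big_geq // big_ord0.
by rewrite big_ord_recr acoefS_lt // IHm // ltnW.
Qed.

Lemma acoefN : acoef q N = 1.
Proof.
rewrite acoef_le // big_split prodfV /=.
rewrite [X in X / _](reindex_inj rev_ord_inj) /=.
rewrite (eq_bigr (fun j : 'I_N => qsinh q j.+1)) => [|j _]; last first.
  by congr qsinh; have := ltn_ord j; lia.
apply: divff; apply/prodf_neq0 => j _; apply: qsinh_neq0; have := ltn_ord j; lia.
Qed.

Lemma acoef_subN m : (m <= N)%N -> acoef q (N - m) = acoef q m.
Proof.
elim: m => [|m IHm] m_lt; first by rewrite subn0 acoefN /acoef big_geq.
have NmS : (N - m = (N - m.+1).+1)%N by lia.
have s_neq0 k : (0 < k <= N)%N -> qsinh q k != 0 by move=> k_bd; apply: qsinh_neq0; lia.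
rewrite acoefS_lt // -(IHm (ltnW m_lt)) NmS acoefS_lt; last by lia.
rewrite -NmS (_ : N - (N - m.+1) = m.+1)%N; last by lia.
rewrite -mulrA -{1}[acoef q _]mulr1; congr (_ * _).
by rewrite mulrA divfK ?divff ?s_neq0 //; lia.
Qed.

Lemma acoef_neq0 m : (m < N)%N -> acoef q m != 0.
Proof.
move=> m_lt; rewrite (acoef_le (ltnW m_lt)); apply/prodf_neq0 => j _.
by rewrite mulf_neq0 ?invr_neq0 ?qsinh_neq0 //; have := ltn_ord j; lia.
Qed.

Lemma acoefNS : acoef q N.+1 = 0.
Proof. by rewrite acoefS qcoshN mulr0 mul0r mulr0. Qed.

Lemma qlam_neq0 l : strict_partition l -> (head 0 l < N)%N -> qlam q l != 0.
Proof.
elim: l => [|x l IHl] sp_xl /= x_lt; first by rewrite qlam_nil oner_neq0.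
have [sp_l l_bd] := strict_partition_cons sp_xl.
rewrite qlam_cons mulf_neq0 //.
  rewrite mulf_neq0 ?acoef_neq0 // prodf_seq_neq0; apply/allP => y /l_bd y_bd.
  by rewrite mulf_neq0 ?invr_neq0 ?qint_neq0 //; lia.
apply: IHl => //; case: l {sp_xl sp_l} l_bd => [|y l /(_ y (mem_head _ _))] /=; lia.
Qed.

Lemma qlam_eq0 l : head 0%N l = N.+1 -> qlam q l = 0.
Proof. by case: l => [|x l] //= ->; rewrite qlam_cons acoefNS !mul0r. Qed.

Lemma qlam_consN l : strict_partition (N :: l) -> qlam q (N :: l) = qlam q l.
Proof.
case/strict_partition_cons => _ l_bd; rewrite qlam_cons acoefN mul1r.
rewrite big_seq big1 ?mul1r // => y /l_bd y_bd.
by rewrite qint_subN ?divff ?qint_neq0 //; lia.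
Qed.

End PrimitiveRootOfOrder4N.

Theorem corollary2p28 (N : nat) (q : algC) :
  (2 <= N)%N -> (4 * N)%N.-primitive_root q -> q ^+ N = 'i ->
  [/\ (forall l : seq nat, strict_partition l -> (head 0%N l < N)%N ->
          qlam q l != 0)
    /\ (forall l : seq nat, strict_partition l -> head 0%N l = N.+1 ->
          (nth 0%N l 1 <= N - 2)%N -> qlam q l = 0),
      (forall m : nat, (m <= N)%N -> acoef q (N - m) = acoef q m)
    & (forall l : seq nat, strict_partition (N :: l) ->
          qlam q (N :: l) = qlam q l)].
Proof.
move=> N_ge2 prim_q qN; split; first split.
- by move=> l; apply: qlam_neq0.
- (* The bound on lambda_2 only excludes the pole [lambda_1 + lambda_2] = [2N] = 0;
     with x / 0 = 0 the vanishing of a_(N+1) suffices. *)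
  move=> l _ l1 _; exact: (qlam_eq0 qN l1).
- by move=> m; apply: acoef_subN.
- by move=> l; apply: qlam_consN.
Qed.
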